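(* The $\alpha$-pass algorithm does not provide an approximation ratio better than $\frac12$ for the clique inference problem with nonnegative vertex potentials and entropy clique potentials $C(\mathbf{v})=\lambda\sum_{v\in V}n_v(\mathbf{v})\log n_v(\mathbf{v})$, $\lambda>0$: there is a family of such instances (indexed by the number of vertices $n$) on which the ratio of the score of the $\alpha$-pass output to the optimal score tends to at most $\frac12$ as $n\to\infty$.
   Context: Clique inference problem: there are $n$ vertices $1,\dots,n$, a finite set $V$ of values, real vertex potentials $\psi_{jv}$ ($1\le j\le n$, $v\in V$), and a clique potential $C$ depending only on the counts $n_v(\mathbf{v})=|\{j:v_j=v\}|$ (with $0\log 0=0$); the objective is $F(\mathbf{v})=\sum_j\psi_{jv_j}+C(\mathbf{v})$ over $\mathbf{v}\in V^n$. The $\alpha$-pass algorithm: for each $\alpha\in V$, sort the vertices in decreasing order of $\psi_{j\alpha}-\max_{v\neq\alpha}\psi_{jv}$; for each $k\in\{1,\dots,n\}$ form the assignment giving the first $k$ sorted vertices the value $\alpha$ and every other vertex a value $v\ne\alpha$ maximizing $\psi_{jv}$; output the formed assignment with the largest $F$ over all $\alpha$ and $k$. *)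

From HB Require Import structures.
From mathcomp Require Import all_boot all_order all_algebra.
From mathcomp Require Import reals exp.
Set Implicit Arguments. Unset Strict Implicit. Unset Printing Implicit Defensive.
Import Order.TTheory GRing.Theory Num.Theory.
Local Open Scope ring_scope.

Section CliqueInference.
Variable R : realType.
(* n vertices 'I_n, value set V = 'I_m *)
Variables (n m : nat).

Definition assignment := {ffun 'I_n -> 'I_m}.

Definition cnt (x : assignment) (v : 'I_m) : nat := #|[set j | x j == v]|.

(* entropy clique potential  C(x) = lam * sum_v n_v log n_v  (0 log 0 = 0:
   the term is n_v%:R * ln n_v%:R, which is 0 when n_v = 0) *)
Definition entropyC (lam : R) (x : assignment) : R :=
  lam * \sum_(v : 'I_m) (cnt x v)%:R * ln (cnt x v)%:R.

Definition score (psi : 'I_n -> 'I_m -> R) (lam : R) (x : assignment) : R :=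
  \sum_(j : 'I_n) psi j (x j) + entropyC lam x.

(* max_{v <> alpha} psi_{jv}; the default 0 is the true maximum for
   nonnegative potentials whenever the index set is nonempty (and is never
   used otherwise) *)
Definition maxother (psi : 'I_n -> 'I_m -> R) (alpha : 'I_m) (j : 'I_n) : R :=
  \big[Num.max/0]_(v : 'I_m | v != alpha) psi j v.

Definition apkey (psi : 'I_n -> 'I_m -> R) (alpha : 'I_m) (j : 'I_n) : R :=
  psi j alpha - maxother psi alpha j.

(* x is an assignment that the alpha-pass algorithm forms for some alpha and
   some k in {1..n}, under SOME valid tie-breaking of the sort and of the
   argmax: exactly k vertices get alpha, they are a prefix of a decreasing
   sort by apkey (every alpha-vertex has key >= every other vertex), and every
   other vertex gets a value v <> alpha maximizing psi_{jv}. *)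
Definition alphapass_candidate (psi : 'I_n -> 'I_m -> R) (x : assignment) : Prop :=
  exists (alpha : 'I_m) (k : nat),
    [/\ (1 <= k <= n)%N,
        cnt x alpha = k,
        (forall i j : 'I_n, x i = alpha -> x j <> alpha ->
           apkey psi alpha j <= apkey psi alpha i) &
        (forall j : 'I_n, x j <> alpha ->
           forall v : 'I_m, v <> alpha -> psi j v <= psi j (x j))].

End CliqueInference.

From HB Require Import structures.
From mathcomp Require Import all_boot all_order all_algebra.
From mathcomp Require Import reals exp.
From mathcomp Require Import lra zify.
Set Implicit Arguments. Unset Strict Implicit. Unset Printing Implicit Defensive.
Import Order.TTheory GRing.Theory Num.Theory.
Local Open Scope ring_scope.

(* In the hard instance every vertex has two private values of potential 1,
   and blocks of [s = n / g] vertices share a value of potential just below 1;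
   the entropy weight is [1 / ln (n + 2)].  An alpha-pass assignment gives
   every vertex off [alpha] a private value, which carries no entropy, while a
   vertex on [alpha] gains at most 1 of entropy plus its potential for
   [alpha]; these potentials sum to at most [s], so the alpha-pass scores at
   most [n + s].  Assigning each block its shared value scores about
   [n + g s (1 - 1/g)], since [ln s >= (1 - 1/g) ln (n + 2)] once
   [(4 g)^g <= n].  Letting [g] grow slowly with [n] drives the ratio to 1/2. *)

Section ScoreByVertex.
Variables (R : realType) (n m : nat).

Lemma cnt_le (x : assignment n m) v : (cnt x v <= n)%N.
Proof. by rewrite /cnt; apply: leq_trans (max_card _) _; rewrite card_ord. Qed.

Lemma cnt_gt0 (x : assignment n m) j : (0 < cnt x (x j))%N.
Proof. by rewrite /cnt card_gt0; apply/set0Pn; exists j; rewrite inE. Qed.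

Lemma entropy_by_vertex (x : assignment n m) :
  \sum_(v : 'I_m) (cnt x v)%:R * ln ((cnt x v)%:R : R)
  = \sum_(j : 'I_n) ln ((cnt x (x j))%:R : R).
Proof.
rewrite (partition_big x predT) //=; apply: eq_bigr => v _.
rewrite (eq_bigr (fun _ => ln (cnt x v)%:R)); last by move=> j /eqP ->.
rewrite sumr_const /cnt cardsE mulr_natl.
by congr (_ *+ _); apply: eq_card => j; rewrite !inE.
Qed.

Lemma score_by_vertex (psi : 'I_n -> 'I_m -> R) lam x :
  score psi lam x = \sum_(j : 'I_n) (psi j (x j) + lam * ln ((cnt x (x j))%:R)).
Proof. by rewrite /score /entropyC entropy_by_vertex mulr_sumr -big_split. Qed.

End ScoreByVertex.

Section AlphaPassUpperBound.
Variables (R : realType) (n m : nat) (psi : 'I_n -> 'I_m -> R) (lam : R).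
Hypothesis psi_ge0 : forall j v, 0 <= psi j v.
Hypothesis psi_le1 : forall j v, psi j v <= 1.
Hypothesis psi1_private : forall i j v, psi i v = 1 -> psi j v = 1 -> i = j.
Hypothesis psi1_avoids : forall j alpha, exists2 v, v != alpha & psi j v = 1.
Hypothesis lam_ge0 : 0 <= lam.
Hypothesis lam_ln_le1 : lam * ln (n%:R : R) <= 1.

Lemma lam_ln_cnt_le1 (x : assignment n m) v : lam * ln ((cnt x v)%:R : R) <= 1.
Proof.
have [->|c_gt0] := posnP (cnt x v); first by rewrite ln0 // mulr0 ler01.
apply: le_trans lam_ln_le1; rewrite ler_wpM2l //.
have n_gt0 := leq_trans c_gt0 (cnt_le x v).
by rewrite ler_ln ?posrE ?ltr0n ?ler_nat ?cnt_le.
Qed.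

Section Candidate.
Variables (y : assignment n m) (alpha : 'I_m).
Hypothesis y_max : forall j, y j <> alpha ->
  forall v, v <> alpha -> psi j v <= psi j (y j).

Lemma candidate_psi1 j : y j <> alpha -> psi j (y j) = 1.
Proof.
move=> yj; have [v /eqP v_alpha psi_v] := psi1_avoids j alpha.
by apply/le_anti; rewrite psi_le1 -{1}psi_v y_max.
Qed.

Lemma candidate_cnt1 j : y j <> alpha -> cnt y (y j) = 1%N.
Proof.
move=> yj; rewrite /cnt (_ : [set i | y i == y j] = [set j]) ?cards1 //.
apply/setP => i; rewrite !inE; apply/eqP/eqP => [yij|->] //.
have yi : y i <> alpha by rewrite yij.
by apply: (@psi1_private i j (y j)); [rewrite -yij|]; apply: candidate_psi1.
Qed.

End Candidate.

Lemma alphapass_score_le y : alphapass_candidate psi y ->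
  exists alpha, score psi lam y <= n%:R + \sum_(j : 'I_n) psi j alpha.
Proof.
move=> [alpha [k [_ _ _ y_max]]]; exists alpha.
rewrite score_by_vertex -[n in n%:R]card_ord -sumr_const -big_split /=.
apply: ler_sum => j _; case: (eqVneq (y j) alpha) => [->|/eqP yj].
  by rewrite [leRHS]addrC lerD2l lam_ln_cnt_le1.
rewrite (candidate_cnt1 y_max yj) (candidate_psi1 y_max yj) ln1 mulr0 addr0.
by rewrite lerDl psi_ge0.
Qed.

End AlphaPassUpperBound.

Definition ngroups (n : nat) : nat := (\max_(i < n.+1 | (4 * i) ^ i <= n) i)%N.
Definition group_size (n : nat) : nat := (n %/ ngroups n)%N.

Lemma leq_ngroups n i : ((4 * i) ^ i <= n)%N -> (i <= ngroups n)%N.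
Proof.
move=> pow_le; have i_le : (i < n.+1)%N.
  rewrite ltnS; apply: leq_trans pow_le; case: i => // i.
  by apply: ltnW; apply: ltn_expl; lia.
exact: (@leq_bigmax_cond _ (fun i : 'I_n.+1 => (4 * i) ^ i <= n)%N _ (Ordinal i_le)).
Qed.

Lemma ngroups_pow n : (0 < n)%N -> ((4 * ngroups n) ^ ngroups n <= n)%N.
Proof.
move=> n_gt0; rewrite /ngroups.
apply: (big_ind (fun i => (4 * i) ^ i <= n)%N) => // i j.
by rewrite /maxn; case: ifP.
Qed.

Lemma ngroups_le n : (ngroups n <= n)%N.
Proof.
apply: (big_ind (fun i => i <= n)%N) => // [i j i_le j_le|i _]; first by rewrite geq_max i_le.
by rewrite -ltnS.
Qed.

Section GroupSize.
Variable n : nat.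
Let g := ngroups n.
Let s := group_size n.

Lemma group_cover_le : (g * s <= n)%N.
Proof. by rewrite mulnC leq_divM. Qed.

Hypothesis g_gt0 : (0 < g)%N.

Lemma group_size_gt0 : (0 < s)%N.
Proof. by rewrite divn_gt0 // ngroups_le. Qed.

Lemma group_cover_gt : (n < g * s + g)%N.
Proof. by have := ltn_ceil n g_gt0; rewrite mulSn (mulnC (n %/ g)%N) addnC. Qed.

End GroupSize.

Section HardInstance.
Variable R : realType.

Definition nvalues (n : nat) : nat := (2 * n + ngroups n).+1.

(* Kept below 1 so that only the private values reach potential 1. *)
Definition group_weight (n : nat) : R := 1 - (n.+1%:R)^-1.

Definition entropy_weight (n : nat) : R := (ln (n.+2%:R : R))^-1.

(* Values [j] and [n + j] are private to vertex [j]; value [2 n + i] is shared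
   by the [i]-th block of [group_size n] consecutive vertices. *)
Definition hard_psi (n : nat) (j : 'I_n) (v : 'I_(nvalues n)) : R :=
  if (v < 2 * n)%N then (if (v %% n == j)%N then 1 else 0)
  else if (j %/ group_size n == v - 2 * n)%N then group_weight n else 0.

Lemma group_weight_ge0 n : 0 <= group_weight n.
Proof. by rewrite subr_ge0 invf_le1 ?ler1n ?ltr0n. Qed.

Lemma group_weight_lt1 n : group_weight n < 1.
Proof. by rewrite ltrBlDr ltrDl invr_gt0 ltr0n. Qed.

Lemma entropy_weight_gt0 n : 0 < entropy_weight n.
Proof. by rewrite invr_gt0 ln_gt0 // ltr1n. Qed.

Lemma entropy_weight_ln_le1 n : entropy_weight n * ln (n%:R : R) <= 1.
Proof.
have ln_n2_gt0 : 0 < ln (n.+2%:R : R) by rewrite ln_gt0 // ltr1n.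
rewrite /entropy_weight mulrC ler_pdivrMr // mul1r.
have [->|n_gt0] := posnP n; first by rewrite ln0 // ln_ge0 // ler1n.
by rewrite ler_ln ?posrE ?ltr0n // ler_nat leqW.
Qed.

Lemma hard_psi_ge0 n j v : 0 <= @hard_psi n j v.
Proof. by rewrite /hard_psi; repeat case: ifP => _ //; apply: group_weight_ge0. Qed.

Lemma hard_psi_le1 n j v : @hard_psi n j v <= 1.
Proof. by rewrite /hard_psi; repeat case: ifP => _ //; apply/ltW/group_weight_lt1. Qed.

Lemma hard_psi_eq1 n j v : @hard_psi n j v = 1 -> (v %% n)%N = j.
Proof.
rewrite /hard_psi; case: ifP => _; first by case: eqP => // _ /eqP; rewrite eq_sym oner_eq0.
case: ifP => _ w1; last by move/eqP: w1; rewrite eq_sym oner_eq0.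
by have := group_weight_lt1 n; rewrite w1 ltxx.
Qed.

Lemma hard_psi1_private n i j v : @hard_psi n i v = 1 -> @hard_psi n j v = 1 -> i = j.
Proof. by move=> /hard_psi_eq1 vi /hard_psi_eq1 vj; apply: val_inj; rewrite /= -vi -vj. Qed.

Lemma hard_psi1_avoids n (j : 'I_n) alpha :
  exists2 v : 'I_(nvalues n), v != alpha & @hard_psi n j v = 1.
Proof.
have j_lt := ltn_ord j.
have val_inord k : (k < 2 * n)%N -> nat_of_ord (inord k : 'I_(nvalues n)) = k.
  by move=> k_lt; rewrite inordK // ltnS; lia.
have psi_inord k : (k < 2 * n)%N -> (k %% n = j)%N -> @hard_psi n j (inord k) = 1.
  by move=> k_lt k_mod; rewrite /hard_psi val_inord // k_lt k_mod eqxx.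
have [j_alpha|] := eqVneq (inord j) alpha; last first.
  by exists (inord j) => //; apply: psi_inord; rewrite ?modn_small //; lia.
exists (inord (n + j)); last by apply: psi_inord; rewrite ?modnDl ?modn_small //; lia.
apply/eqP=> /(congr1 (@nat_of_ord _)); rewrite -j_alpha !val_inord; lia.
Qed.

Lemma sum_hard_psi_le n alpha : (0 < group_size n)%N ->
  \sum_(j : 'I_n) @hard_psi n j alpha <= (group_size n)%:R.
Proof.
move=> s_gt0; have [alpha_lt|alpha_ge] := boolP (alpha < 2 * n)%N.
  have n_gt0 : (0 < n)%N by lia.
  pose j0 : 'I_n := Ordinal (ltn_pmod alpha n_gt0).
  rewrite (bigD1 j0) //= big1 => [|j j_neq].
    by rewrite addr0 /hard_psi alpha_lt /= eqxx ler1n.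
  rewrite /hard_psi alpha_lt; case: eqP => // j0_j.
  by case/eqP: j_neq; apply: val_inj.
set i := (alpha - 2 * n)%N.
apply: (@le_trans _ _ (\sum_(j : 'I_n | (j %/ group_size n == i)%N) 1)).
  rewrite [leRHS]big_mkcond; apply: ler_sum => j _; rewrite /hard_psi (negbTE alpha_ge).
  by case: ifP => _ //; apply/ltW/group_weight_lt1.
rewrite sumr_const ler_nat.
pose rem (j : 'I_n) : 'I_(group_size n) := Ordinal (ltn_pmod j s_gt0).
rewrite -(@card_in_imset _ _ rem); first by rewrite -[leqRHS]card_ord max_card.
move=> x y; rewrite !unfold_in /= => /eqP x_i /eqP y_i [rem_xy].
apply: val_inj; rewrite /= (divn_eq x (group_size n)) (divn_eq y (group_size n)).
by rewrite x_i y_i rem_xy.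
Qed.

Lemma hard_alphapass_score_le n y : (0 < group_size n)%N ->
  alphapass_candidate (@hard_psi n) y ->
  score (@hard_psi n) (entropy_weight n) y <= n%:R + (group_size n)%:R.
Proof.
move=> s_gt0 y_cand; have [alpha y_le] := alphapass_score_le (@hard_psi_ge0 n)
  (@hard_psi_le1 n) (@hard_psi1_private n) (@hard_psi1_avoids n)
  (ltW (entropy_weight_gt0 n)) (entropy_weight_ln_le1 n) y_cand.
by apply: (le_trans y_le); rewrite lerD2l sum_hard_psi_le.
Qed.

Definition grouped n : assignment n (nvalues n) :=
  [ffun j : 'I_n => if (j < ngroups n * group_size n)%N
                    then inord (2 * n + j %/ group_size n) else inord j].

Section GroupedScore.
Variable n : nat.
Let g := ngroups n.
Let s := group_size n.
Hypothesis s_gt0 : (0 < s)%N.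

Lemma block_lt (j : 'I_n) r : (j < g * s)%N -> (r < s)%N -> (j %/ s * s + r < g * s)%N.
Proof.
move=> j_lt r_lt; have : (j %/ s < g)%N by rewrite ltn_divLR.
by rewrite -(leq_pmul2r s_gt0) mulSn; lia.
Qed.

Lemma grouped_val (j : 'I_n) :
  nat_of_ord (grouped n j) = if (j < g * s)%N then (2 * n + j %/ s)%N else nat_of_ord j.
Proof.
rewrite /grouped ffunE -/g -/s; case: ifP => j_lt; apply: inordK; rewrite ltnS.
  by rewrite leq_add2l; apply: ltnW; rewrite ltn_divLR.
by have := ltn_ord j; lia.
Qed.

Lemma grouped_vertex_score_ge (j : 'I_n) :
  group_weight n + (if (j < g * s)%N then entropy_weight n * ln (s%:R) else 0)
  <= @hard_psi n j (grouped n j) + entropy_weight n * ln ((cnt (grouped n) (grouped n j))%:R).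
Proof.
have := grouped_val j; case: ifP => j_lt grouped_j.
  apply: lerD; first by rewrite /hard_psi grouped_j ltnNge leq_addr /= addKn eqxx.
  rewrite ler_pM2l ?entropy_weight_gt0 // ler_ln ?posrE ?ltr0n ?cnt_gt0 // ler_nat.
  pose blockmate (r : 'I_s) : 'I_n :=
    Ordinal (leq_trans (block_lt j_lt (ltn_ord r)) (group_cover_le n)).
  rewrite -[s in (s <= _)%N]card_ord -cardsT -(@card_in_imset _ _ blockmate); last first.
    by move=> r1 r2 _ _ [/addnI r12]; apply: val_inj.
  apply/subset_leq_card/subsetP => i /imsetP [r _ ->]; rewrite inE.
  apply/eqP/ord_inj; rewrite grouped_val grouped_j /= ifT ?block_lt //.
  by rewrite divnMDl // (divn_small (ltn_ord r)) addn0.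
apply: lerD.
  rewrite /hard_psi grouped_j ifT; last by have := ltn_ord j; lia.
  by rewrite modn_small // eqxx; apply/ltW/group_weight_lt1.
by rewrite mulr_ge0 ?ln_ge0 ?ler1n ?cnt_gt0 // ltW ?entropy_weight_gt0.
Qed.

Lemma grouped_score_ge_weights :
  n%:R * group_weight n + (g * s)%:R * (entropy_weight n * ln (s%:R))
  <= score (@hard_psi n) (entropy_weight n) (grouped n).
Proof.
rewrite score_by_vertex; apply: le_trans (ler_sum _ (fun j _ => grouped_vertex_score_ge j)).
rewrite big_split /= sumr_const card_ord mulr_natl lerD2l.
rewrite -big_mkcond /= -(big_ord_widen _ (fun _ => _) (group_cover_le n)).
by rewrite sumr_const card_ord mulr_natl.
Qed.

End GroupedScore.

Lemma entropy_weight_ln_ge n g s : (0 < g)%N -> (0 < s)%N ->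
  ((4 * g) ^ g <= n)%N -> (n.+2 <= 4 * g * s)%N ->
  1 - g%:R^-1 <= entropy_weight n * ln (s%:R : R).
Proof.
move=> g_gt0 s_gt0 pow_le n_le.
have ln_n2_gt0 : 0 < ln (n.+2%:R : R) by rewrite ln_gt0 // ltr1n.
have g_gt0' : 0 < (g%:R : R) by rewrite ltr0n.
have ln_n2_le : ln (n.+2%:R : R) <= ln ((4 * g)%:R) + ln (s%:R).
  rewrite -lnM ?posrE ?ltr0n ?muln_gt0 // -natrM.
  by rewrite ler_ln ?posrE ?ltr0n ?muln_gt0 ?g_gt0 ?s_gt0 // ler_nat.
have ln_pow_le : ln ((4 * g)%:R : R) * g%:R <= ln (n.+2%:R : R).
  rewrite mulr_natr -lnXn ?ltr0n ?muln_gt0 // -natrX.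
  by rewrite ler_ln ?posrE ?ltr0n ?expn_gt0 ?muln_gt0 ?g_gt0 // ler_nat; lia.
rewrite /entropy_weight mulrC ler_pdivlMr // mulrBl mul1r.
rewrite -ler_pdivlMr // in ln_pow_le; rewrite mulrC; lra.
Qed.

Lemma ngroups_sq_le n : (0 < ngroups n)%N -> (ngroups n * ngroups n <= n)%N.
Proof.
move=> g_gt0; apply: leq_trans (ngroups_pow (leq_trans g_gt0 (ngroups_le n))).
case: (ngroups n) g_gt0 => [|[|g]] // _.
apply: (@leq_trans ((4 * g.+2) ^ 2)); first by rewrite expnS expn1 leq_mul ?leq_pmull.
by rewrite leq_pexp2l ?muln_gt0.
Qed.

Lemma grouped_score_ge n : (0 < ngroups n)%N ->
  n%:R - 1 + (ngroups n * group_size n)%:R - (group_size n)%:R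
  <= score (@hard_psi n) (entropy_weight n) (grouped n).
Proof.
move=> g_gt0; have s_gt0 := group_size_gt0 g_gt0.
apply: le_trans (grouped_score_ge_weights s_gt0).
set g := ngroups n in g_gt0 s_gt0 *; set s := group_size n in s_gt0 *.
have weight_ge : n%:R - 1 <= n%:R * group_weight n.
  by rewrite mulrBr mulr1 lerD2l lerN2 ler_pdivrMr ?ltr0n // mul1r ler_nat.
have n2_le : (n.+2 <= 4 * g * s)%N.
  have := group_cover_gt g_gt0; have := leq_pmulr g s_gt0; rewrite -/g -/s; lia.
have ln_ge : (g * s)%:R - s%:R <= (g * s)%:R * (entropy_weight n * ln (s%:R : R)).
  have pow_le := ngroups_pow (leq_trans g_gt0 (ngroups_le n)).
  apply: le_trans (ler_wpM2l (ler0n _ _) (entropy_weight_ln_ge g_gt0 s_gt0 pow_le n2_le)).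
  by rewrite mulrBr mulr1 natrM mulrAC divff ?mul1r // pnatr_eq0 -lt0n.
lra.
Qed.

End HardInstance.

Lemma half_ratio_le (R : realType) (e : R) (n g s : nat) :
  0 < e -> e <= 1 -> 3 <= e * g%:R -> (2 <= g)%N -> (0 < s)%N ->
  (g * s <= n)%N -> (g * g <= n)%N -> (n < g * s + g)%N ->
  let opt := n%:R - 1 + (g * s)%:R - s%:R in
  0 < opt /\ n%:R + s%:R <= (1 / 2 + e) * opt.
Proof.
move=> e_gt0 e_le1 eg_ge3 g_ge2 s_gt0 gs_le gg_le n_lt opt.
have {g_ge2}g_ge2 : 2 <= (g%:R : R) by rewrite ler_nat.
have {s_gt0}s_ge1 : 1 <= (s%:R : R) by rewrite ler1n.
have {gs_le}gs_le : (g%:R * s%:R : R) <= n%:R by rewrite -natrM ler_nat.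
have {gg_le}gg_le : (g%:R * g%:R : R) <= n%:R by rewrite -natrM ler_nat.
have {n_lt}n_lt : (n%:R : R) < g%:R * s%:R + g%:R by rewrite -natrM -natrD ltr_nat.
rewrite /opt natrM; split; first by nra.
have g_gt0 : 0 < (g%:R : R) by lra.
rewrite -(ler_pM2l g_gt0); nra.
Qed.

Theorem theorem8 (R : realType) :
  exists (m : nat -> nat) (psi : forall n : nat, 'I_n -> 'I_(m n) -> R)
         (lam : nat -> R),
    (forall n, 0 < lam n) /\
    (forall n (j : 'I_n) (v : 'I_(m n)), 0 <= psi n j v) /\
    (forall eps : R, 0 < eps -> exists N : nat, forall n : nat, (N <= n)%N ->
       exists xopt : assignment n (m n),
         0 < score (psi n) (lam n) xopt /\
         forall y : assignment n (m n), alphapass_candidate (psi n) y ->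
           score (psi n) (lam n) y <= (1 / 2 + eps) * score (psi n) (lam n) xopt).
Proof.
exists nvalues, (@hard_psi R), (@entropy_weight R).
split; first exact: entropy_weight_gt0.
split; first exact: hard_psi_ge0.
move=> eps eps_gt0; set e := Num.min eps 1.
have e_gt0 : 0 < e by rewrite lt_min eps_gt0 ltr01.
have e_le1 : e <= 1 by rewrite ge_min lexx orbT.
pose G := maxn (Num.truncn (3 / e)).+1 2.
exists ((4 * G) ^ G)%N => n /leq_ngroups G_le_g.
have g_ge2 : (2 <= ngroups n)%N by apply: leq_trans G_le_g; rewrite leq_maxr.
have g_gt0 : (0 < ngroups n)%N by apply: leq_trans g_ge2.
have eg_ge3 : 3 <= e * (ngroups n)%:R.
  rewrite mulrC -ler_pdivrMr //; apply/ltW/(lt_le_trans (truncnS_gt _)).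
  by rewrite ler_nat (leq_trans (leq_maxl _ _) G_le_g).
have [opt_gt0 alphapass_le] := half_ratio_le e_gt0 e_le1 eg_ge3 g_ge2
  (group_size_gt0 g_gt0) (group_cover_le n) (ngroups_sq_le g_gt0) (group_cover_gt g_gt0).
have opt_le := grouped_score_ge R g_gt0.
exists (grouped n); split=> [|y /(hard_alphapass_score_le (group_size_gt0 g_gt0)) y_le].
  exact: lt_le_trans opt_le.
apply: (le_trans (le_trans y_le alphapass_le)).
by apply: ler_pM; rewrite ?(ltW opt_gt0) ?lerD2l ?ge_min ?lexx //; lra.
Qed.
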